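(* Let $\mathbb{K}$ be a field and $n\ge2$ an integer. Let $Q=\{(2,2),(3,3),\dots,(n+2,n+2)\}$ and $P=\{(1,1)\}\cup\big(\{2,\dots,n+2\}^2\setminus Q\big)$, viewed as subsets of $\{1,\dots,n+2\}^2$. Then the CI-problem $(P,Q,n+2)$ is solvable over $\mathbb{K}$ if and only if the characteristic of $\mathbb{K}$ divides $n$.
   Context: A constrained invertibility (CI) problem is a triple $(P,Q,N)$ with $P,Q\subseteq\{1,\dots,N\}^2$; it is solvable over $\mathbb{K}$ if there is an invertible $N\times N$ matrix $A$ over $\mathbb{K}$ with $A_{i,j}=0$ for all $(i,j)\in P$ and $(A^{-1})_{i',j'}=0$ for all $(i',j')\in Q$. ''Characteristic divides $n$'' means $n\cdot1_{\mathbb{K}}=0$ (in particular it fails in characteristic $0$ unless... $n=0$, which is excluded). *)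

From HB Require Import structures.
From mathcomp Require Import all_boot all_order all_algebra.
Set Implicit Arguments. Unset Strict Implicit. Unset Printing Implicit Defensive.
Import GRing.Theory.
Local Open Scope ring_scope.

(* Indices {1,...,N} of the paper are represented 0-based as 'I_N. *)
Definition CI_solvable (K : fieldType) (N : nat)
    (P Q : {set 'I_N * 'I_N}) : Prop :=
  exists A : 'M[K]_N,
    [/\ A \in unitmx,
        forall i j, (i, j) \in P -> A i j = 0
      & forall i j, (i, j) \in Q -> (invmx A) i j = 0].

Definition Qset (n : nat) : {set 'I_(n.+2) * 'I_(n.+2)} :=
  [set p | (p.1 == p.2) && (0 < val p.1)%N].

Definition Pset (n : nat) : {set 'I_(n.+2) * 'I_(n.+2)} :=
  [set p | (val p.1 == 0%N) && (val p.2 == 0%N)]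
  :|: ([set p | (0 < val p.1)%N && (0 < val p.2)%N] :\: Qset n).
Arguments CI_solvable : clear implicits.

From mathcomp Require Import all_boot all_order all_algebra.

Set Implicit Arguments.
Unset Strict Implicit.
Unset Printing Implicit Defensive.
Import GRing.Theory.
Local Open Scope ring_scope.

(* Write the (m+1) x (m+1) matrices, m = n + 1, in blocks by splitting off
   index 0.  The pattern forces A = [[0, u], [v, D]] with D diagonal and
   A^-1 = [[c, x], [y, E]] with E having zero diagonal.  Comparing diagonal
   entries of A A^-1 = 1 in the lower block gives v_i x_i = 1 for every i, and
   the (0,0) entry of A^-1 A = 1 is then c * 0 + sum_i x_i v_i = m.  Hence
   m = 1, i.e. n = m - 1 = 0 in K.  Conversely, when m = 1 the matrix with D = 1 and
   u, v all ones has inverse c = -1, x, y all ones and E = 1 - J. *)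

Lemma lift0_eq0 m (k : 'I_m) : (lift ord0 k == ord0) = false.
Proof. by apply/negbTE; rewrite eq_sym neq_lift. Qed.

Lemma mulmx_ord0E (R : pzSemiRingType) p m q
    (A : 'M[R]_(p, m.+1)) (B : 'M[R]_(m.+1, q)) i j :
  (A *m B) i j = A i ord0 * B ord0 j + \sum_k A i (lift ord0 k) * B (lift ord0 k) j.
Proof. by rewrite mxE big_ord_recl. Qed.

Section ArrowPattern.

Variables (R : comUnitRingType) (m : nat).
Implicit Types A C : 'M[R]_m.+1.

Definition arrow_pattern A C : Prop :=
  [/\ A ord0 ord0 = 0,
      forall i j, i != ord0 -> j != ord0 -> i != j -> A i j = 0
    & forall i, i != ord0 -> C i i = 0].

Lemma arrow_pattern_natr1 A :
  A \in unitmx -> arrow_pattern A (invmx A) -> m%:R = 1 :> R.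
Proof.
move=> A_unit [A00 A_offdiag C_diag]; set C := invmx A.
have lift_neq0 k : lift ord0 k != ord0 by rewrite lift0_eq0.
have border_inv i : C ord0 (lift ord0 i) * A (lift ord0 i) ord0 = 1.
  move/matrixP/(_ (lift ord0 i) (lift ord0 i)): (mulmxV A_unit).
  rewrite mulmx_ord0E big1 ?addr0 => [|k _]; first by rewrite mxE eqxx mulrC.
  have [->|neq_ki] := eqVneq k i; first by rewrite C_diag ?mulr0.
  by rewrite A_offdiag ?mul0r ?lift_neq0 // (inj_eq lift_inj) eq_sym.
move/matrixP/(_ ord0 ord0): (mulVmx A_unit).
rewrite mulmx_ord0E A00 mulr0 add0r mxE eqxx /=.
by rewrite (eq_bigr _ (fun k _ => border_inv k)) sumr_const card_ord.
Qed.

Definition arrow_mx : 'M[R]_m.+1 := \matrix_(i, j)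
  if i == ord0 then (j != ord0)%:R else if j == ord0 then 1 else (i == j)%:R.

Definition arrow_inv_mx : 'M[R]_m.+1 := \matrix_(i, j)
  if i == ord0 then (if j == ord0 then -1 else 1)
  else if j == ord0 then 1 else (i == j)%:R - 1.

Lemma arrow_mx_pattern : arrow_pattern arrow_mx arrow_inv_mx.
Proof.
split=> [|i j i_neq0 j_neq0 neq_ij|i i_neq0]; rewrite !mxE ?eqxx //.
  by rewrite (negbTE i_neq0) (negbTE j_neq0) (negbTE neq_ij).
by rewrite (negbTE i_neq0) subrr.
Qed.

Lemma arrow_mxK : m%:R = 1 :> R -> arrow_mx *m arrow_inv_mx = 1%:M.
Proof.
move=> m1; apply/matrixP=> i j; rewrite mulmx_ord0E.
case: (unliftP ord0 i) => [i'|] ->; case: (unliftP ord0 j) => [j'|] ->;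
  under eq_bigr => k _ do rewrite !mxE !lift0_eq0 ?(inj_eq lift_inj);
  rewrite !mxE ?eqxx ?lift0_eq0 ?(inj_eq lift_inj) /=.
- rewrite (bigD1 i') //= big1 => [|k /negbTE]; last by rewrite eq_sym => ->; rewrite mul0r.
  by rewrite eqxx !mul1r addr0 addrC subrK.
- rewrite (bigD1 i') //= big1 => [|k /negbTE]; last by rewrite eq_sym => ->; rewrite mul0r.
  by rewrite eqxx mul1r mulr1 addr0 addNr.
- under eq_bigr do rewrite mul1r.
  rewrite mul0r add0r sumrB (bigD1 j') //= big1 => [|k /negbTE-> //].
  by rewrite sumr_const card_ord eqxx addr0 m1 subrr.
- under eq_bigr do rewrite mul1r.
  by rewrite mul0r add0r sumr_const card_ord m1.
Qed.

Lemma arrow_mx_unit : m%:R = 1 :> R -> arrow_mx \in unitmx.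
Proof. by move=> m1; case: (mulmx1_unit (arrow_mxK m1)). Qed.

Lemma invmx_arrow_mx : m%:R = 1 :> R -> invmx arrow_mx = arrow_inv_mx.
Proof.
move=> m1; rewrite -[invmx _]mulmx1 -(arrow_mxK m1) mulmxA.
by rewrite mulVmx ?mul1mx ?arrow_mx_unit.
Qed.

End ArrowPattern.

Lemma in_Pset n (i j : 'I_n.+2) :
  ((i, j) \in Pset n) =
  (i == ord0) && (j == ord0) || [&& i != ord0, j != ord0 & i != j].
Proof.
rewrite !inE /= !lt0n -!val_eqE /=.
by case: (val i == 0%N); case: (val j == 0%N); case: (val i == val j).
Qed.

Lemma in_Qset n (i j : 'I_n.+2) : ((i, j) \in Qset n) = (i == j) && (i != ord0).
Proof. by rewrite !inE /= -lt0n -val_eqE. Qed.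

Lemma CI_solvable_arrow (K : fieldType) n :
  CI_solvable K n.+2 (Pset n) (Qset n) <->
  exists2 A : 'M[K]_n.+2, A \in unitmx & arrow_pattern A (invmx A).
Proof.
split=> [[A [A_unit A_P C_Q]]|[A A_unit [A00 A_offdiag C_diag]]].
  exists A => //; split=> [|i j *|i i_neq0]; first by rewrite A_P ?in_Pset ?eqxx.
    by rewrite A_P // in_Pset; apply/orP; right; apply/and3P.
  by rewrite C_Q // in_Qset eqxx.
exists A; split=> // i j.
  rewrite in_Pset => /orP[/andP[/eqP-> /eqP->] // | /and3P[]]; exact: A_offdiag.
by rewrite in_Qset => /andP[/eqP-> /C_diag].
Qed.

Theorem mainTheorem7 (K : fieldType) (n : nat) (hn : (2 <= n)%N) :
  CI_solvable K (n.+2) (Pset n) (Qset n) <-> (n%:R : K) = 0.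
Proof.
split=> [/CI_solvable_arrow[A A_unit /(arrow_pattern_natr1 A_unit)]|n0].
  by rewrite mulrSr => /(canRL (addrK 1)); rewrite subrr.
have n1 : n.+1%:R = 1 :> K by rewrite mulrSr n0 add0r.
apply/CI_solvable_arrow; exists (arrow_mx K n.+1); first exact: arrow_mx_unit.
by rewrite invmx_arrow_mx //; apply: arrow_mx_pattern.
Qed.
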